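(* Let $r\ge2$, $m=2$, $a_{ij}\in\mathbb{C}$ ($i=1,2$, $1\le j\le r$), $f_i=\sum_{j=1}^r a_{ij}z_j$, and let $S_1$ be the family $(z_1^2,\dots,z_r^2,f_1^2,f_2^2)$. Then $S_1$ is linearly dependent if and only if at least one of the following holds: (a) there are two members of $S_1$ (with distinct indices) that are linearly dependent, i.e. one is a scalar multiple of the other; (b) there exist $1\le M\ne N\le r$ such that $a_{1i}=a_{2i}=0$ for all $i\notin\{M,N\}$, i.e. $f_1=a_{1M}z_M+a_{1N}z_N$ and $f_2=a_{2M}z_M+a_{2N}z_N$.
   Context: A family of polynomials is linearly independent over $\mathbb{C}$ if no nontrivial $\mathbb{C}$-linear combination of its members (counted with their indices) vanishes; otherwise it is linearly dependent. *)

From HB Require Import structures.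
From mathcomp Require Import all_boot all_order all_algebra.
From mathcomp Require Import complex.
From mathcomp Require Import Rstruct.
From mathcomp Require Import mpoly.
Set Implicit Arguments. Unset Strict Implicit. Unset Printing Implicit Defensive.
Import GRing.Theory.
Local Open Scope ring_scope.

Definition Cplx : Type := complex Rdefinitions.R.

Definition lin_dep (I : finType) (n : nat) (F : I -> {mpoly Cplx[n]}) : Prop :=
  exists c : I -> Cplx, (exists i, c i != 0) /\ \sum_(i : I) c i *: F i = 0.

Definition linf (r : nat) (a : 'I_2 -> 'I_r -> Cplx) (k : 'I_2) : {mpoly Cplx[r]} :=
  \sum_(j < r) a k j *: 'X_j.

Definition S1 (r : nat) (a : 'I_2 -> 'I_r -> Cplx) (i : 'I_(r + 2)) : {mpoly Cplx[r]} :=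
  match split i with
  | inl j => 'X_j ^+ 2
  | inr k => linf a k ^+ 2
  end.

(* A relation sum_j c_j z_j^2 + d_0 f_1^2 + d_1 f_2^2 = 0, evaluated at points
   supported on two coordinates j, l, forces c_j = -(d_0 a_{1j}^2 + d_1 a_{2j}^2)
   and d_0 a_{1j} a_{1l} + d_1 a_{2j} a_{2l} = 0 for j <> l.  If some d_k is 0,
   the other f is a multiple of a single variable, so its square is proportional
   to some z_j^2.  If both are nonzero and the rows a_1, a_2 are proportional, so
   are f_1^2 and f_2^2.  Otherwise some 2x2 minor at columns M, N is nonzero, and
   the cross relations for m outside {M, N} form a nonsingular linear system in
   (a_{1m}, a_{2m}), so f_1, f_2 only involve z_M, z_N. *)

From HB Require Import structures.
From mathcomp Require Import all_boot all_order all_algebra.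
From mathcomp Require Import complex.
From mathcomp Require Import Rstruct.
From mathcomp Require Import mpoly.
From mathcomp Require Import ring.
Set Implicit Arguments. Unset Strict Implicit. Unset Printing Implicit Defensive.
Import GRing.Theory Num.Theory.
Local Open Scope ring_scope.

Lemma sum_supp2 (V : nmodType) (I : finType) (F : I -> V) j l : j != l ->
  (forall i, i != j -> i != l -> F i = 0) -> \sum_i F i = F j + F l.
Proof.
move=> jl F0; rewrite (bigD1 j) //= (bigD1 l) 1?eq_sym //=.
by rewrite big1 ?addr0 // => i /andP[il ij]; apply: F0.
Qed.

Lemma sum_ord2 (V : nmodType) (F : 'I_2 -> V) : \sum_(k < 2) F k = F 0 + F 1.
Proof. by rewrite big_ord_recl big_ord1; congr (F _ + F _); apply: val_inj. Qed.

Lemma ord2_cases (k : 'I_2) : k = 0 \/ k = 1.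
Proof. by case: k => -[|[|//]] k2; [left | right]; apply: val_inj. Qed.

Lemma exists_ord_neq r (j : 'I_r) : (1 < r)%N -> exists l : 'I_r, j != l.
Proof.
move=> r2; have r1 := ltnW r2.
have [->|j0] := eqVneq j (Ordinal r1); last by exists (Ordinal r1).
by exists (Ordinal r2); apply/eqP => /(congr1 val).
Qed.

Section PairwiseProducts.
Variables (R : idomainType) (I : finType).
Implicit Types u v : I -> R.

Lemma pairwise_mul0_supp1 u (i0 : I) :
  (forall j l, j != l -> u j * u l = 0) -> exists j, forall l, l != j -> u l = 0.
Proof.
move=> u0; have [j /= uj|u_eq0] := pickP (fun j => u j != 0); last first.
  by exists i0 => l _; apply/eqP/negbFE/u_eq0.
exists j => l lj; apply/eqP; move: (u0 j l); rewrite eq_sym => /(_ lj) /eqP.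
by rewrite mulf_eq0 (negbTE uj).
Qed.

Lemma minor_neq0_supp2 (d0 d1 : R) u v j l : d0 != 0 -> d1 != 0 ->
  u j * v l - u l * v j != 0 ->
  (forall m m', m != m' -> d0 * u m * u m' + d1 * v m * v m' = 0) ->
  forall m, m != j -> m != l -> u m = 0 /\ v m = 0.
Proof.
move=> d0N0 d1N0 minorN0 cross m mj ml.
have Ej := cross m j mj; have El := cross m l ml.
have um0 : d0 * u m * (u j * v l - u l * v j) =
    (d0 * u m * u j + d1 * v m * v j) * v l - (d0 * u m * u l + d1 * v m * v l) * v j.
  by ring.
have vm0 : d1 * v m * (u j * v l - u l * v j) =
    (d0 * u m * u l + d1 * v m * v l) * u j - (d0 * u m * u j + d1 * v m * v j) * u l.
  by ring.
rewrite Ej El !mul0r subrr in um0 vm0.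
move/eqP: um0; move/eqP: vm0.
rewrite !mulf_eq0 (negbTE d0N0) (negbTE d1N0) (negbTE minorN0) /= !orbF.
by move=> /eqP-> /eqP->.
Qed.

Lemma minors0_proportional u v : (forall j l, u j * v l = u l * v j) ->
  exists p q, ((p != 0) || (q != 0)) /\ forall j, q * u j = p * v j.
Proof.
move=> minor0; have [k /= ukvk|uv0] := pickP (fun k => (u k != 0) || (v k != 0)).
  by exists (u k), (v k); split=> // j; rewrite mulrC minor0.
exists 0, 1; split=> [|j]; first by rewrite oner_eq0 orbT.
by have /negbT/norP[/negbNE/eqP-> _] := uv0 j; rewrite mulr0 mul0r.
Qed.

Lemma cross_rel_supp2_or_proportional (d0 d1 : R) u v : d0 != 0 -> d1 != 0 ->
  (forall j l, j != l -> d0 * u j * u l + d1 * v j * v l = 0) ->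
  (exists j l, j != l /\ forall m, m != j -> m != l -> u m = 0 /\ v m = 0)
  \/ (exists p q, ((p != 0) || (q != 0)) /\ forall j, q * u j = p * v j).
Proof.
move=> d0N0 d1N0 cross.
have [[j l] /= minorN0|minor0] :=
  pickP (fun jl : I * I => u jl.1 * v jl.2 - u jl.2 * v jl.1 != 0).
  left; exists j, l; split; last exact: (minor_neq0_supp2 d0N0 d1N0 minorN0 cross).
  by apply: contraNneq minorN0 => ->; rewrite subrr.
right; apply: minors0_proportional => j l; apply/eqP; rewrite -subr_eq0.
exact/negbFE/(minor0 (j, l)).
Qed.

End PairwiseProducts.

Section PairDependence.
Variables (I : finType) (n : nat) (F : I -> {mpoly Cplx[n]}).

Definition has_dep_pair : Prop :=
  exists i j : I, i != j /\ lin_dep (fun b : bool => if b then F i else F j).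

Lemma has_dep_pair_rel i j c1 c2 : i != j -> (c1 != 0) || (c2 != 0) ->
  c1 *: F i + c2 *: F j = 0 -> has_dep_pair.
Proof.
move=> ij c12N0 rel; exists i, j; split=> //.
exists (fun b => if b then c1 else c2); rewrite big_bool; split=> //.
by case/orP: c12N0 => ?; [exists true | exists false].
Qed.

Lemma has_dep_pair_lin_dep : has_dep_pair -> lin_dep F.
Proof.
case=> i [j [ij [c [[b cbN0] rel]]]]; rewrite big_bool /= in rel.
have ji : j != i by rewrite eq_sym.
exists (fun k => if k == i then c true else if k == j then c false else 0).
split.
  by case: b cbN0 => ?; [exists i; rewrite eqxx | exists j; rewrite (negbTE ji) eqxx].
rewrite (sum_supp2 ij) => [|k ki kj]; last by rewrite (negbTE ki) (negbTE kj) scale0r.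
by rewrite eqxx (negbTE ji) eqxx.
Qed.

End PairDependence.

Section S1.
Variables (r : nat) (a : 'I_2 -> 'I_r -> Cplx).

Lemma S1_lshift j : S1 a (lshift 2 j) = 'X_j ^+ 2.
Proof. by rewrite /S1 (unsplitK (inl _ j)). Qed.

Lemma S1_rshift k : S1 a (rshift r k) = linf a k ^+ 2.
Proof. by rewrite /S1 (unsplitK (inr _ k)). Qed.

Definition S1_comb (cz : 'I_r -> Cplx) (cf : 'I_2 -> Cplx) : {mpoly Cplx[r]} :=
  \sum_j cz j *: 'X_j ^+ 2 + \sum_k cf k *: linf a k ^+ 2.

Lemma sum_S1 (c : 'I_(r + 2) -> Cplx) :
  \sum_i c i *: S1 a i = S1_comb (fun j => c (lshift 2 j)) (fun k => c (rshift r k)).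
Proof.
by rewrite big_split_ord; congr (_ + _); apply: eq_bigr => i _;
  rewrite ?S1_lshift ?S1_rshift.
Qed.

Lemma lin_dep_S1P : lin_dep (S1 a) <->
  exists cz cf, ((exists j, cz j != 0) \/ (exists k, cf k != 0)) /\ S1_comb cz cf = 0.
Proof.
split=> [[c [[i ciN0] rel]] | [cz [cf [czfN0 rel]]]].
  exists (fun j => c (lshift 2 j)), (fun k => c (rshift r k)); rewrite -sum_S1.
  by split=> //; move: ciN0; rewrite -(splitK i); case: split => x ?; [left|right]; exists x.
pose c i := match split i with inl j => cz j | inr k => cf k end.
have cl j : c (lshift 2 j) = cz j by rewrite /c (unsplitK (inl _ j)).
have cr k : c (rshift r k) = cf k by rewrite /c (unsplitK (inr _ k)).
exists c; split.
  by case: czfN0 => -[x ?]; [exists (lshift 2 x); rewrite cl | exists (rshift r x); rewrite cr].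
rewrite sum_S1 -rel; congr (_ + _); apply: eq_bigr => x _; by rewrite ?cl ?cr.
Qed.

Lemma meval_linf x k : meval x (linf a k) = \sum_j a k j * x j.
Proof. by rewrite raddf_sum; apply: eq_bigr => j _; rewrite /= mevalZ mevalXU. Qed.

Lemma meval_S1_comb x cz cf : meval x (S1_comb cz cf) =
  \sum_j cz j * x j ^+ 2 + \sum_k cf k * (\sum_j a k j * x j) ^+ 2.
Proof.
rewrite mevalD !raddf_sum; congr (_ + _); apply: eq_bigr => i _.
  by rewrite /= mevalZ rmorphXn /= mevalXU.
by rewrite /= mevalZ rmorphXn /= meval_linf.
Qed.

Lemma meval_S1_comb_supp2 cz cf j l s t : j != l ->
  meval (fun i => s * (i == j)%:R + t * (i == l)%:R) (S1_comb cz cf) =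
  cz j * s ^+ 2 + cz l * t ^+ 2 + \sum_k cf k * (a k j * s + a k l * t) ^+ 2.
Proof.
move=> jl; have lj : l != j by rewrite eq_sym.
have off i : i != j -> i != l -> s * (i == j)%:R + t * (i == l)%:R = 0.
  by move=> /negbTE-> /negbTE->; rewrite !mulr0 addr0.
rewrite meval_S1_comb (sum_supp2 jl) => [|i ij il]; last by rewrite off ?expr0n ?mulr0.
rewrite !eqxx (negbTE jl) (negbTE lj) !mulr1 !mulr0 addr0 add0r.
congr (_ + _); apply: eq_bigr => k _; rewrite (sum_supp2 jl) => [|i ij il].
  by rewrite !eqxx (negbTE jl) (negbTE lj) !mulr1 !mulr0 addr0 add0r.
by rewrite off ?mulr0.
Qed.

Section Relation.
Variables (cz : 'I_r -> Cplx) (cf : 'I_2 -> Cplx).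
Hypothesis comb0 : S1_comb cz cf = 0.

Lemma S1_comb0_supp2 j l s t : j != l ->
  cz j * s ^+ 2 + cz l * t ^+ 2
  + (cf 0 * (a 0 j * s + a 0 l * t) ^+ 2 + cf 1 * (a 1 j * s + a 1 l * t) ^+ 2) = 0.
Proof. by move=> jl; have := meval_S1_comb_supp2 cz cf s t jl; rewrite comb0 meval0 sum_ord2. Qed.

Lemma S1_comb0_diag j : (1 < r)%N -> cz j = - (cf 0 * a 0 j ^+ 2 + cf 1 * a 1 j ^+ 2).
Proof.
move=> r2; have [l jl] := exists_ord_neq j r2.
by apply/eqP; rewrite -subr_eq0 opprK; apply/eqP; rewrite -(S1_comb0_supp2 1 0 jl); ring.
Qed.

Lemma S1_comb0_cross j l : (1 < r)%N -> j != l ->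
  cf 0 * a 0 j * a 0 l + cf 1 * a 1 j * a 1 l = 0.
Proof.
move=> r2 jl; have := S1_comb0_supp2 1 1 jl.
rewrite (S1_comb0_diag j r2) (S1_comb0_diag l r2) => rel.
apply: (@mulfI _ 2); first by rewrite pnatr_eq0.
by rewrite mulr0 -[RHS]rel; ring.
Qed.

End Relation.

Lemma linf_supp1 k j : (forall l, l != j -> a k l = 0) -> linf a k = a k j *: 'X_j.
Proof.
move=> a0; rewrite /linf (bigD1 j) //= big1 ?addr0 // => l lj.
by rewrite a0 // scale0r.
Qed.

Lemma linf_supp2 k M N : M != N -> (forall i, i != M -> i != N -> a k i = 0) ->
  linf a k = a k M *: 'X_M + a k N *: 'X_N.
Proof. by move=> MN a0; rewrite /linf (sum_supp2 MN) // => i iM iN; rewrite a0 ?scale0r. Qed.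

Lemma S1_dep_pair_supp1 k j : (forall l, l != j -> a k l = 0) -> has_dep_pair (S1 a).
Proof.
move=> a0; apply: (@has_dep_pair_rel _ _ _ (lshift 2 j) (rshift r k) (a k j ^+ 2) (-1)).
- by rewrite eq_lrshift.
- by rewrite oppr_eq0 oner_eq0 orbT.
- by rewrite S1_lshift S1_rshift (linf_supp1 a0) exprZn scaleN1r subrr.
Qed.

Lemma S1_dep_pair_proportional p q : (p != 0) || (q != 0) ->
  (forall j, q * a 0 j = p * a 1 j) -> has_dep_pair (S1 a).
Proof.
move=> pqN0 prop; have qp : q *: linf a 0 = p *: linf a 1.
  by rewrite /linf !scaler_sumr; apply: eq_bigr => j _; rewrite !scalerA prop.
apply: (@has_dep_pair_rel _ _ _ (rshift r 0) (rshift r 1) (q ^+ 2) (- p ^+ 2)).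
- by rewrite eq_shift.
- by rewrite oppr_eq0 !expf_eq0 /= orbC.
- by rewrite !S1_rshift scaleNr -!exprZn qp subrr.
Qed.

(* [a 1 M a 1 N f_1^2 - a 0 M a 0 N f_2^2] has no [z_M z_N] term, so it lies in
   the span of [z_M^2] and [z_N^2]; it is nontrivial unless [f_1] is a
   multiple of a single variable. *)
Lemma lin_dep_S1_supp2 M N : M != N ->
  (forall i, i != M -> i != N -> a 0 i = 0 /\ a 1 i = 0) -> lin_dep (S1 a).
Proof.
move=> MN a0; have NM : N != M by rewrite eq_sym.
have fE k : linf a k = a k M *: 'X_M + a k N *: 'X_N.
  by apply: linf_supp2 => // i iM iN; have [] := a0 i iM iN; case: (ord2_cases k) => ->.
have [/eqP|a0MN] := eqVneq (a 0 M * a 0 N) 0.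
  rewrite mulf_eq0 => /orP[] /eqP a00; apply/has_dep_pair_lin_dep.
    apply: (@S1_dep_pair_supp1 0 N) => l lN; have [->//|lM] := eqVneq l M.
    by case: (a0 l lM lN).
  apply: (@S1_dep_pair_supp1 0 M) => l lM; have [->//|lN] := eqVneq l N.
  by case: (a0 l lM lN).
pose d0 := a 1 M * a 1 N; pose d1 := - (a 0 M * a 0 N).
pose cz i := if i == M then - (d0 * a 0 M ^+ 2 + d1 * a 1 M ^+ 2)
             else if i == N then - (d0 * a 0 N ^+ 2 + d1 * a 1 N ^+ 2) else 0.
apply/lin_dep_S1P; exists cz, (fun k => if k == 0 then d0 else d1); split.
  by right; exists 1; rewrite /= oppr_eq0.
rewrite /S1_comb (sum_supp2 MN) => [|i iM iN]; last by rewrite /cz (negbTE iM) (negbTE iN) scale0r.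
rewrite sum_ord2 /cz /= eqxx (negbTE NM) eqxx !fE -!mul_mpolyC /d0 /d1.
ring.
Qed.

Lemma lin_dep_S1_cases : (1 < r)%N -> lin_dep (S1 a) ->
  has_dep_pair (S1 a) \/
  exists M N : 'I_r, M != N /\ forall i, i != M -> i != N -> a 0 i = 0 /\ a 1 i = 0.
Proof.
move=> r2 /lin_dep_S1P[cz [cf [czfN0 comb0]]].
have cross := S1_comb0_cross comb0 r2.
have i0 : 'I_r := Ordinal (ltnW r2).
have supp1 k : (forall j l, j != l -> a k j * a k l = 0) -> has_dep_pair (S1 a).
  by move=> /(pairwise_mul0_supp1 i0)[j a0]; apply: S1_dep_pair_supp1 a0.
have [cf00|cf0N0] := eqVneq (cf 0) 0; have [cf10|cf1N0] := eqVneq (cf 1) 0.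
- exfalso; case: czfN0 => -[x].
    by rewrite (S1_comb0_diag comb0 x r2) cf00 cf10 !mul0r addr0 oppr0 eqxx.
  by case: (ord2_cases x) => ->; rewrite ?cf00 ?cf10 eqxx.
- left; apply: (supp1 1) => j l /cross; rewrite cf00 !mul0r add0r -mulrA => /eqP.
  by rewrite mulf_eq0 (negbTE cf1N0) => /eqP.
- left; apply: (supp1 0) => j l /cross; rewrite cf10 !mul0r addr0 -mulrA => /eqP.
  by rewrite mulf_eq0 (negbTE cf0N0) => /eqP.
have [[M [N]]|[p [q [pqN0 prop]]]] := cross_rel_supp2_or_proportional cf0N0 cf1N0 cross.
  by right; exists M, N.
by left; apply: S1_dep_pair_proportional pqN0 prop.
Qed.

End S1.

Theorem corollary2p2 (r : nat) (hr : (2 <= r)%N) (a : 'I_2 -> 'I_r -> Cplx) :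
  lin_dep (S1 a) <->
  ((exists i j : 'I_(r + 2), i != j /\
      lin_dep (fun b : bool => if b then S1 a i else S1 a j))
   \/
   (exists M N : 'I_r, M != N /\
      forall i : 'I_r, i != M -> i != N -> a 0 i = 0 /\ a 1 i = 0)).
Proof.
split; first exact: lin_dep_S1_cases.
case=> [dep | [M [N [MN a0]]]]; [exact: has_dep_pair_lin_dep | exact: lin_dep_S1_supp2 MN a0].
Qed.
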